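(* Let $X \subseteq \mathrm{VF}^n\times\mathrm{VF}^m$ and $\bar a\in\mathrm{VF}^n$. Let $L_1, L_2 \subseteq \mathrm{VF}^m$ be two minimal limit sets of $X$ at $\bar a$, and let $\overline{L}_1, \overline{L}_2$ be their topological closures. Then $\overline{L}_1 = \overline{L}_2$.
   Context: $\mathrm{VF}$ is an algebraically closed valued field with value group $\Gamma$, valuation $v$, and the valuation topology. For $\bar b\in\mathrm{VF}^k$, $\epsilon\in\Gamma$, $\mathfrak{o}(\bar b,\epsilon)=\{\bar c: v(c_i-b_i)>\epsilon\text{ for all }i\}$. For $X\subseteq \mathrm{VF}^n\times\mathrm{VF}^m$, write $\mathrm{pr}_{\le n}X$ for its projection to $\mathrm{VF}^n$ and $\mathrm{fib}(X,\bar c)=\{\bar d:(\bar c,\bar d)\in X\}$. A set $L\subseteq\mathrm{VF}^m$ is a limit set of $X$ at $\bar a\in\mathrm{VF}^n$ if for every $\epsilon\in\Gamma$ there is $\delta\in\Gamma$ such that whenever $\bar c\in\mathfrak{o}(\bar a,\delta)\cap(\mathrm{pr}_{\le n}X\setminus\{\bar a\})$, we have $\mathrm{fib}(X,\bar c)\subseteq\bigcup_{\bar b\in L'}\mathfrak{o}(\bar b,\epsilon)$ for some $L'\subseteq L$. A limit set $L$ of $X$ at $\bar a$ is minimal if no proper subset of $L$ is a limit set of $X$ at $\bar a$. *)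

From HB Require Import structures.
From mathcomp Require Import all_boot all_order all_algebra.
From mathcomp Require Import boolp classical_sets.
Set Implicit Arguments. Unset Strict Implicit. Unset Printing Implicit Defensive.
Import Order.TTheory GRing.Theory Num.Theory.
Local Open Scope ring_scope.
Local Open Scope classical_set_scope.

(* Values of a valuation: [None] stands for +infinity = v(0). *)
Section Valued.
Variables (K : fieldType) (G : porderZmodType).

Definition vle (x y : option G) : bool :=
  match x, y with
  | _, None => true
  | None, Some _ => false
  | Some a, Some b => (a <= b)%R
  end.

Definition vmin (x y : option G) : option G := if vle x y then x else y.

Definition vadd (x y : option G) : option G :=
  match x, y with Some a, Some b => Some (a + b) | _, _ => None end.

Definition vgt (x : option G) (eps : G) : bool :=
  match x with None => true | Some a => (eps < a)%R end.

Record is_valuation (v : K -> option G) : Prop := {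
  val_total : forall a b : G, (a <= b)%R || (b <= a)%R;
  val_addmono : forall a b c : G, (a <= b)%R -> (a + c <= b + c)%R;
  val_inf : forall x, v x = None <-> x = 0;
  val_mul : forall x y, v (x * y) = vadd (v x) (v y);
  val_add : forall x y, vle (vmin (v x) (v y)) (v (x + y));
  val_onto : forall g : G, exists x, v x = Some g
}.

Variable v : K -> option G.

Definition vball (k : nat) (b : 'rV[K]_k) (eps : G) : set 'rV[K]_k :=
  [set c | forall i : 'I_k, vgt (v (c ord0 i - b ord0 i)) eps].

Definition pr_le (n m : nat) (X : set ('rV[K]_n * 'rV[K]_m)) : set 'rV[K]_n :=
  [set c | exists d, X (c, d)].

Definition fib (n m : nat) (X : set ('rV[K]_n * 'rV[K]_m)) (c : 'rV[K]_n)
  : set 'rV[K]_m := [set d | X (c, d)].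

Definition is_limit_set (n m : nat) (X : set ('rV[K]_n * 'rV[K]_m))
    (a : 'rV[K]_n) (L : set 'rV[K]_m) : Prop :=
  forall eps : G, exists delta : G, forall c : 'rV[K]_n,
    vball a delta c -> pr_le X c -> c <> a ->
    exists L' : set 'rV[K]_m, L' `<=` L /\
      fib X c `<=` \bigcup_(b in L') vball b eps.

Definition is_minimal_limit_set (n m : nat) (X : set ('rV[K]_n * 'rV[K]_m))
    (a : 'rV[K]_n) (L : set 'rV[K]_m) : Prop :=
  is_limit_set X a L /\
  forall L' : set 'rV[K]_m, L' `<=` L -> L' <> L -> ~ is_limit_set X a L'.

(* Topological closure in the valuation (product) topology on K^k; the balls
   o(x, eps) form a neighbourhood basis of x. *)
Definition vclosure (k : nat) (L : set 'rV[K]_k) : set 'rV[K]_k :=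
  [set x | forall eps : G, exists2 b, L b & vball x eps b].

End Valued.

From HB Require Import structures.
From mathcomp Require Import all_boot all_order all_algebra.
From mathcomp Require Import boolp classical_sets.
Set Implicit Arguments. Unset Strict Implicit. Unset Printing Implicit Defensive.
Local Open Scope ring_scope.
Local Open Scope classical_set_scope.
Import Order.TTheory GRing.Theory Num.Theory.

(* If x is in the closure of a minimal limit set L1 but not in that of a limit
   set L2, some ball o(x, eps0) misses L2.  For small eps every fibre point is
   eps-close to L2, hence (ultrametric triangle) its eps-close points of L1 lie
   outside o(x, eps0); so L1 minus o(x, eps0) is still a limit set, and it is
   proper because x is adherent to L1, contradicting minimality.  Hence the
   closure of a minimal limit set lies in the closure of every limit set. *)

Section Valuation.
Variables (K : fieldType) (G : porderZmodType) (v : K -> option G).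
Hypothesis hv : is_valuation v.

Lemma vgt_le (e1 e2 : G) (p : option G) : (e1 <= e2)%R -> vgt p e2 -> vgt p e1.
Proof. by case: p => //= g le12; apply: le_lt_trans. Qed.

Lemma vgtD (x y : K) (e : G) :
  vgt (v x) e -> vgt (v y) e -> vgt (v (x + y)) e.
Proof.
have := val_add hv x y; rewrite /vmin.
case: (v (x + y)) => [c|] //; case: (v x) => [p|]; case: (v y) => [q|] //=.
- by case: ifP => _ /= le_c ltp ltq; apply: lt_le_trans le_c.
- by move=> le_c ltp _; apply: lt_le_trans le_c.
- by move=> le_c _ ltq; apply: lt_le_trans le_c.
Qed.

Lemma ubound2 (e1 e2 : G) : exists e, (e1 <= e)%R /\ (e2 <= e)%R.
Proof. by case/orP: (val_total hv e1 e2) => le; [exists e2 | exists e1]. Qed.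

Lemma valuation1 : v 1 = Some 0.
Proof.
have := val_mul hv 1 1; rewrite mulr1.
case E: (v 1) => [g|] /= => [[gg] | _]; first by rewrite -(addrK g g) -gg subrr.
by move: E => /(val_inf hv) /eqP; rewrite oner_eq0.
Qed.

Lemma valuationN1 : v (-1) = Some 0.
Proof.
have := val_mul hv (-1) (-1); rewrite mulrNN mulr1 valuation1.
case: (v (-1)) => [h|] //= [hh]; congr Some.
(* h + h = 0 in an ordered group forces h = 0 *)
by apply/eqP; rewrite eq_le; case/orP: (val_total hv h 0) => le;
  have := val_addmono hv h le; rewrite add0r -hh => ->; rewrite le ?andbT.
Qed.

Lemma valuationN (x : K) : v (- x) = v x.
Proof.
by rewrite -mulN1r val_mul // valuationN1; case: (v x) => //= g; rewrite add0r.
Qed.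

Lemma vballW (k : nat) (b : 'rV[K]_k) (e1 e2 : G) :
  (e1 <= e2)%R -> vball v b e2 `<=` vball v b e1.
Proof. by move=> le12 c bc i; apply: vgt_le le12 (bc i). Qed.

Lemma vball_sym (k : nat) (b c : 'rV[K]_k) (e : G) :
  vball v b e c -> vball v c e b.
Proof. by move=> bc i; rewrite -valuationN opprB; apply: bc. Qed.

Lemma vball_trans (k : nat) (b c d : 'rV[K]_k) (e : G) :
  vball v b e c -> vball v c e d -> vball v b e d.
Proof.
by move=> bc cd i; rewrite -(subrK (c ord0 i) (d ord0 i)) -addrA; apply: vgtD.
Qed.

Lemma limit_setD_vball (n m : nat) (X : set ('rV[K]_n * 'rV[K]_m))
    (a : 'rV[K]_n) (L1 L2 : set 'rV[K]_m) (x : 'rV[K]_m) (eps0 : G) :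
  is_limit_set v X a L1 -> is_limit_set v X a L2 ->
  L2 `&` vball v x eps0 = set0 -> is_limit_set v X a (L1 `\` vball v x eps0).
Proof.
move=> lim1 lim2 L2x eps.
have [eps1 [le_eps le_eps0]] := ubound2 eps eps0.
have [d1 Hd1] := lim1 eps1; have [d2 Hd2] := lim2 eps1.
have [delta [le1 le2]] := ubound2 d1 d2.
exists delta => c ac Xc ca.
have [L1' [sL1' cov1]] := Hd1 c (vballW le1 ac) Xc ca.
have [L2' [sL2' cov2]] := Hd2 c (vballW le2 ac) Xc ca.
exists (L1' `\` vball v x eps0); split; first by move=> b [/sL1'].
move=> d /[dup] /cov1 [b L1'b bd] /cov2 [b' L2'b' b'd].
exists b; last exact: vballW le_eps _ bd.
split=> // xb; suff : (L2 `&` vball v x eps0) b' by rewrite L2x.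
split; first exact: sL2'.
apply: vball_trans xb (vball_trans (vballW le_eps0 bd) _).
exact/vball_sym/(vballW le_eps0).
Qed.

Lemma minimal_limit_set_vclosure_sub (n m : nat)
    (X : set ('rV[K]_n * 'rV[K]_m)) (a : 'rV[K]_n) (L1 L2 : set 'rV[K]_m) :
  is_minimal_limit_set v X a L1 -> is_limit_set v X a L2 ->
  vclosure v L1 `<=` vclosure v L2.
Proof.
move=> [lim1 min1] lim2 x cl1; apply: contrapT => ncl2.
have [eps0 L2x] : exists eps0, L2 `&` vball v x eps0 = set0.
  apply: contrapT => N; apply: ncl2 => eps.
  have /set0P[b [L2b xb]] : L2 `&` vball v x eps != set0.
    by apply/negP => /eqP E; apply: N; exists eps.
  by exists b.
apply: (min1 (L1 `\` vball v x eps0)); first exact: subDsetl.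
- move=> E; have [b L1b xb] := cl1 eps0.
  by move: L1b; rewrite -E => -[].
- exact: limit_setD_vball lim2 L2x.
Qed.

End Valuation.

Theorem lemma3p2 (K : closedFieldType) (G : porderZmodType)
  (v : K -> option G) (hv : is_valuation v) (n m : nat)
  (X : set ('rV[K]_n * 'rV[K]_m)) (a : 'rV[K]_n) (L1 L2 : set 'rV[K]_m) :
  is_minimal_limit_set v X a L1 -> is_minimal_limit_set v X a L2 ->
  vclosure v L1 = vclosure v L2.
Proof.
move=> min1 min2; apply/seteqP; split.
- exact: (minimal_limit_set_vclosure_sub hv min1 min2.1).
- exact: (minimal_limit_set_vclosure_sub hv min2 min1.1).
Qed.
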